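(* Let $d\ge2$, $n\ge1$, $N=nd$, $F\in[0,1)$ with $F\neq2^{-N}$, and let $\rho_x=U(x)\rho_0U(x)^\dagger$ where $\rho_0$ is the $N$-qubit depolarized GHZ state with fidelity $F$. Let $M=\sigma_x^{\otimes N}$ and, for $x$ with $v_1\cdot\nabla_x\langle M\rangle\ne0$, define $$\mathrm{Var}_M(x)=\frac{\langle M^2\rangle-\langle M\rangle^2}{\big|v_1\cdot\nabla_x\langle M\rangle\big|^2},\qquad \langle A\rangle=\mathrm{Tr}(\rho_xA),\ v_1=\tfrac1{\sqrt d}(1,\dots,1)^T.$$ Then, with $\theta_1=v_1^Tx$ and $c=F-\frac{1-F}{2^N-1}$, $$\mathrm{Var}_M(x)=\frac{1-c^2\cos^2(n\sqrt d\,\theta_1)}{d\,n^2c^2\sin^2(n\sqrt d\,\theta_1)},$$ and in particular $\mathrm{Var}_M(x)\to+\infty$ as $x\to0$.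
   Context: Setting: $d$ nodes with $n$ qubits each, qubits labelled $(i,k)$; $U(x)=\exp[-i\sum_{i=0}^{d-1}x_iH_i]$ with $H_i=\frac12\sum_{k=0}^{n-1}\sigma_z^{(i,k)}$, $x\in\mathbb{R}^d$. The $N$-qubit depolarized GHZ state with fidelity $F$ is $F|\mathrm{GHZ}_N\rangle\langle\mathrm{GHZ}_N|+\frac{1-F}{2^N-1}(I-|\mathrm{GHZ}_N\rangle\langle\mathrm{GHZ}_N|)$, $|\mathrm{GHZ}_N\rangle=(|0\cdots0\rangle+|1\cdots1\rangle)/\sqrt2$. $\mathrm{Var}_M$ is the error-propagation estimation variance for $\theta_1$ from measuring $M$. *)

From mathcomp Require Import all_boot all_order all_algebra all_classical all_reals all_analysis.
Set Implicit Arguments. Unset Strict Implicit. Unset Printing Implicit Defensive.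
Import Order.TTheory GRing.Theory Num.Theory.
From mathcomp Require Import complex.
Local Open Scope ring_scope.
Local Open Scope complex_scope.

Section QDefs.
Variable R : realType.
Variables d n : nat.

(* Computational basis of the N = n*d qubits labelled (i,k), i < d, k < n:
   a basis state assigns a bit to every qubit (false = |0>, true = |1>). *)
Definition qbasis := {ffun 'I_d * 'I_n -> bool}.

Definition Op := qbasis -> qbasis -> R[i].

Definition opmul (A B : Op) : Op := fun s t => \sum_(u : qbasis) A s u * B u t.
Definition opadj (A : Op) : Op := fun s t => (A t s)^*.
Definition opid : Op := fun s t => if s == t then 1 else 0.
Definition optr (A : Op) : R[i] := \sum_(s : qbasis) A s s.

(* eigenvalue of sigma_z on |b> *)
Definition zval (b : bool) : R := if b then -1 else 1.

(* H_i = 1/2 sum_k sigma_z^(i,k) is diagonal in the computational basis,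
   with eigenvalue Hval i s on |s>. *)
Definition Hval (i : 'I_d) (s : qbasis) : R := 2^-1 * \sum_(k < n) zval (s (i, k)).

(* U(x) = exp[-i sum_i x_i H_i]; since the H_i are commuting diagonal
   operators, U(x) is the diagonal operator with phases exp(-i sum_i x_i Hval i s). *)
Definition expi (t : R) : R[i] := (cos t)%:C + 'i * (sin t)%:C.
Definition Uop (x : 'rV[R]_d) : Op :=
  fun s t => if s == t then expi (- \sum_(i < d) x 0 i * Hval i s) else 0.

Definition ghz (s : qbasis) : R[i] :=
  if (s == [ffun => false]) || (s == [ffun => true])
  then ((Num.sqrt (2 : R))^-1)%:C else 0.
Definition ghzproj : Op := fun s t => ghz s * (ghz t)^*.

Definition rho0 (F : R) : Op :=
  fun s t => F%:C * ghzproj s t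
             + ((1 - F) / ((2 ^ (n * d))%:R - 1))%:C * (opid s t - ghzproj s t).

Definition rhox (F : R) (x : 'rV[R]_d) : Op :=
  opmul (opmul (Uop x) (rho0 F)) (opadj (Uop x)).

(* M = sigma_x^{tensor N}: flips every qubit *)
Definition Mop : Op := fun s t => if t == [ffun q => ~~ s q] then 1 else 0.

(* <A> = Tr(rho_x A)  (real part; it is real for Hermitian A) *)
Definition expect (F : R) (A : Op) (x : 'rV[R]_d) : R := Re (optr (opmul (rhox F x) A)).

Definition partial (f : 'rV[R]_d -> R) (x : 'rV[R]_d) (i : 'I_d) : R :=
  derive1 (fun t : R => f (x + t *: delta_mx 0 i)) 0.
Definition v1 : 'rV[R]_d := const_mx (Num.sqrt (d%:R : R))^-1.
Definition dirgrad (v : 'rV[R]_d) (f : 'rV[R]_d -> R) (x : 'rV[R]_d) : R :=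
  \sum_(i < d) v 0 i * partial f x i.

Definition VarM (F : R) (x : 'rV[R]_d) : R :=
  (expect F (opmul Mop Mop) x - (expect F Mop x) ^+ 2)
  / (`| dirgrad v1 (expect F Mop) x | ^+ 2).

Definition theta1 (x : 'rV[R]_d) : R := \sum_(i < d) v1 0 i * x 0 i.

End QDefs.

From mathcomp Require Import all_boot all_order all_algebra all_classical all_reals all_analysis.
Import Order.TTheory GRing.Theory Num.Theory numFieldNormedType.Exports.
From mathcomp Require Import complex ring lra.
Set Implicit Arguments. Unset Strict Implicit. Unset Printing Implicit Defensive.
Local Open Scope ring_scope.

(* U(x) is diagonal in the computational basis, multiplying |s> by
   exp(-i sum_i x_i H_i(s)), and M = sigma_x^N sends |s> to its bitwise
   complement.  Hence Tr(rho_x M) only sees the coherence between |0...0> and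
   |1...1>, which in the depolarized GHZ state is c/2, and it picks up their
   relative phase n sum_i x_i = n sqrt(d) theta_1:
   <M> = c cos(n sqrt(d) theta_1).  Since M^2 = I, <M^2> = Tr rho_x = 1, and
   the derivative along v_1 is -sqrt(d) n c sin(n sqrt(d) theta_1), which gives
   the formula.  For the divergence, c^2 < 1 because F < 1 and 2^N > 2, while
   sin^2(n sum_i x_i) <= n^2 (sum_i x_i)^2 <= d n^2 |x|^2 by Cauchy-Schwarz, so
   Var_M(x) >= (1 - c^2) / (d^2 n^4 |x|^2). *)

Lemma derive1_scale_cos_shift (R : realType) (a k b : R) :
  derive1 (fun t : R => a * cos (k * (b + t))) 0 = - (a * k * sin (k * b)).
Proof.
have inner : is_derive (0 : R) 1 (k \*: (cst b + id)) (k * (0 + 1)) by apply: is_deriveZ.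
have outer := is_deriveZ a (is_derive1_comp (is_derive_cos ((k \*: (cst b + id)) 0)) inner).
have -> : (fun t => a * cos (k * (b + t))) = a \*: (cos \o (k \*: (cst b + id))) by [].
rewrite derive1E derive_val /GRing.scale /= !fctE addr0 add0r mulr1.
change (k *: b) with (k * b); ring.
Qed.

Lemma sin_sqr_le (R : realType) (y : R) : sin y ^+ 2 <= y ^+ 2.
Proof.
wlog y_ge0 : y / 0 <= y.
  move=> le; case: (leP 0 y) => [/le //|/ltW y_le0].
  by have := le (- y); rewrite sinN !sqrrN oppr_ge0; apply.
have sin_deriv z : z \in `]0, y[ -> is_derive z 1 (@sin R) (cos z).
  by move=> _; exact: is_derive_sin.
have [|z _] := MVT_segment y_ge0 sin_deriv.
  exact/continuous_subspaceT/continuous_sin.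
rewrite sin0 !subr0 => ->.
by rewrite exprMn ler_piMl ?sqr_ge0 // -(cos2Dsin2 z) lerDl sqr_ge0.
Qed.

Lemma sqr_sum_le (R : realDomainType) (m : nat) (a : 'I_m -> R) :
  (\sum_(i < m) a i) ^+ 2 <= m%:R * \sum_(i < m) a i ^+ 2.
Proof.
have sum_pairs : \sum_(i < m) \sum_(j < m) (a i ^+ 2 + a j ^+ 2)
    = (m%:R * \sum_(i < m) a i ^+ 2) *+ 2.
  under eq_bigr do rewrite big_split /= sumr_const card_ord.
  by rewrite big_split /= sumrMnl sumr_const card_ord mulr2n mulr_natl.
suff: (\sum_(i < m) a i) ^+ 2 *+ 2 <= (m%:R * \sum_(i < m) a i ^+ 2) *+ 2 by rewrite lerMn2r.
rewrite -sum_pairs expr2 mulr_suml -sumrMnl.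
apply: ler_sum => i _; rewrite mulr_sumr -sumrMnl; apply: ler_sum => j _.
by have := sqr_ge0 (a i - a j); rewrite sqrrB addrAC subr_ge0.
Qed.

Lemma depolarized_visibility_sqr_lt1 (R : realFieldType) (m F : R) :
  2 < m -> 0 <= F -> F < 1 -> (F - (1 - F) / (m - 1)) ^+ 2 < 1.
Proof.
move=> m_gt2 F_ge0 F_lt1; set q := (1 - F) / (m - 1).
have q_ge0 : 0 <= q by rewrite divr_ge0 //; lra.
have q_lt : q < 1 - F by rewrite ltr_pdivrMr; [nra | lra].
rewrite -subr_gt0 -(expr1n _ 2) subr_sqr pmulr_rgt0; lra.
Qed.

Lemma lt_div_of_small (R : realFieldType) (K D Q A : R) :
  0 < K -> 0 < D -> 0 < Q -> Q < K / (D * (`|A| + 1)) -> A < K / (D * Q).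
Proof.
move=> K_gt0 D_gt0 Q_gt0.
have DA_gt0 : 0 < D * (`|A| + 1) by rewrite mulr_gt0 ?ltr_wpDl.
rewrite ltr_pdivlMr // => Q_small; rewrite ltr_pdivlMr ?mulr_gt0 //.
have := ler_wpM2r (ltW (mulr_gt0 D_gt0 Q_gt0)) (ler_norm A).
nra.
Qed.

Lemma sum_if_eqr (T : finType) (V : nmodType) (t : T) (f : T -> V) :
  \sum_(u : T) (if u == t then f u else 0) = f t.
Proof. by rewrite -big_mkcond big_pred1_eq. Qed.

Lemma divr_sqrt (R : rcfType) (a : R) : a / Num.sqrt a = Num.sqrt a.
Proof.
have [a_gt0|a_le0] := ltP 0 a; last by rewrite ler0_sqrtr // invr0 mulr0.
by rewrite -{1}(sqr_sqrtr (ltW a_gt0)) expr2 mulfK // gt_eqF // sqrtr_gt0.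
Qed.

Section ComplexPhase.
Variable R : realType.
Local Open Scope complex_scope.

Lemma expiE (t : R) : expi t = cos t +i* sin t.
Proof. by rewrite /expi; simpc. Qed.

Lemma expi_mulJ (t : R) : expi t * (expi t)^* = 1.
Proof. by rewrite expiE; simpc; rewrite -!expr2 cos2Dsin2 [sin t * _]mulrC addNr. Qed.

Lemma Re_expi_pair (a b k : R) :
  Re (expi a * k%:C * (expi b)^* + expi b * k%:C * (expi a)^*) = 2 * k * cos (a - b).
Proof. rewrite !expiE /= cosB; ring. Qed.

End ComplexPhase.

Section Operators.
Variables (R : realType) (d n : nat).
Local Notation qb := (qbasis d n).
Local Notation Op := (Op R d n).
Local Notation M := (@Mop R d n).
Local Notation Id := (@opid R d n).
Local Open Scope complex_scope.

Definition bitflip (s : qb) : qb := [ffun q => ~~ s q].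

Lemma bitflipK : involutive bitflip.
Proof. by move=> s; apply/ffunP => q; rewrite !ffunE negbK. Qed.

Definition diagop (f : qb -> R[i]) : Op := fun s t => if s == t then f s else 0.

Lemma opmul_diagl f (A : Op) s t : opmul (diagop f) A s t = f s * A s t.
Proof.
rewrite /opmul (eq_bigr (fun u => if u == s then f s * A s t else 0)) ?sum_if_eqr //.
by move=> u _; rewrite /diagop eq_sym; case: eqP => [->|]; rewrite ?mul0r.
Qed.

Lemma opmul_diagr (A : Op) f s t : opmul A (diagop f) s t = A s t * f t.
Proof.
rewrite /opmul (eq_bigr (fun u => if u == t then A s t * f t else 0)) ?sum_if_eqr //.
by move=> u _; rewrite /diagop; case: eqP => [->|]; rewrite ?mulr0.
Qed.

Lemma opadj_diag f : opadj (diagop f) = diagop (fun s => (f s)^*).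
Proof.
apply/funext => s; apply/funext => t; rewrite /opadj /diagop eq_sym.
by case: eqP => [->|]; rewrite ?conjc0.
Qed.

Lemma opmul_Mop (A : Op) s t : opmul A M s t = A s (bitflip t).
Proof.
rewrite /opmul (eq_bigr (fun u => if u == bitflip t then A s (bitflip t) else 0)) ?sum_if_eqr //.
move=> u _; rewrite /Mop -/(bitflip u).
have -> : (t == bitflip u) = (u == bitflip t).
  by apply/eqP/eqP => ->; rewrite bitflipK.
by case: eqP => [->|]; rewrite ?mulr1 ?mulr0.
Qed.

Lemma Mop_sqr : opmul M M = Id.
Proof.
apply/funext => s; apply/funext => t; rewrite opmul_Mop /Mop /opid -/(bitflip _).
by rewrite (can_eq bitflipK) eq_sym.
Qed.

Definition phase (x : 'rV[R]_d) (s : qb) : R := \sum_(i < d) x 0 i * Hval R i s.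

Lemma UopE x : Uop x = diagop (fun s => expi (- phase x s)).
Proof. by []. Qed.

Lemma rhoxE F x s t :
  rhox F x s t = expi (- phase x s) * rho0 F s t * (expi (- phase x t))^*.
Proof. by rewrite /rhox UopE opadj_diag opmul_diagr opmul_diagl. Qed.

Definition zeros : qb := [ffun => false].
Definition ones : qb := [ffun => true].
Definition is_ghz (s : qb) : bool := (s == zeros) || (s == ones).

Lemma bitflip_const b : bitflip [ffun => b] = [ffun => ~~ b].
Proof. by apply/ffunP => q; rewrite !ffunE. Qed.

Lemma is_ghz_bitflip s : is_ghz (bitflip s) = is_ghz s.
Proof.
rewrite /is_ghz -[zeros]bitflipK -[ones]bitflipK !(can_eq bitflipK) !bitflip_const.
by rewrite orbC.
Qed.

Lemma ghzprojE s t : ghzproj R s t = if is_ghz s && is_ghz t then (2^-1)%:C else 0.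
Proof.
rewrite /ghzproj /ghz -/(is_ghz s) -/(is_ghz t) -[Num.conj _]/(conjc _).
case: (is_ghz s); case: (is_ghz t); rewrite ?conjc0 ?mul0r ?mulr0 //=.
by simpc; rewrite -invfM -expr2 sqr_sqrtr ?ler0n.
Qed.

Definition visibility (F : R) : R := F - (1 - F) / ((2 ^ (n * d))%:R - 1).

Definition xsum (x : 'rV[R]_d) : R := \sum_(i < d) x 0 i.

Lemma phase_const x b : phase x [ffun => b] = 2^-1 * n%:R * zval R b * xsum x.
Proof.
rewrite /phase /xsum mulr_sumr; apply: eq_bigr => i _.
rewrite /Hval (eq_bigr (fun _ => zval R b)) => [|k _]; last by rewrite ffunE.
by rewrite sumr_const card_ord -mulr_natl; ring.
Qed.

Section Nondegenerate.
Hypotheses (d_gt0 : (0 < d)%N) (n_gt0 : (0 < n)%N).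

Let q0 : 'I_d * 'I_n := (Ordinal d_gt0, Ordinal n_gt0).

Lemma zeros_neq_ones : zeros != ones.
Proof. by apply/eqP => /ffunP /(_ q0); rewrite !ffunE. Qed.

Lemma bitflip_neq s : s != bitflip s.
Proof. by apply/eqP => /ffunP /(_ q0); rewrite ffunE; case: (s q0). Qed.

Lemma sum_ghz (V : nmodType) (f : qb -> V) : \sum_(s | is_ghz s) f s = f zeros + f ones.
Proof.
rewrite big_mkcond (bigD1 zeros) // (bigD1 ones) 1?eq_sym ?zeros_neq_ones //=.
by rewrite /is_ghz !eqxx orbT big1 ?addr0 // => s /andP[/negbTE -> /negbTE ->].
Qed.

Lemma card_qbasis : #|{: qb}| = (2 ^ (n * d))%N.
Proof. by rewrite card_ffun card_prod !card_ord card_bool mulnC. Qed.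

Lemma pow2_sub1_neq0 : (2 ^ (n * d))%:R - 1 != 0 :> R.
Proof. by rewrite subr_eq0 pnatr_eq1 -(expn0 2) eqn_exp2l // -lt0n muln_gt0 n_gt0. Qed.

Lemma optr_ghzproj : optr (@ghzproj R d n) = 1.
Proof.
rewrite /optr; under eq_bigr do rewrite ghzprojE andbb.
by rewrite -big_mkcond sum_ghz -rmorphD; simpc; congr (_ +i* _); field.
Qed.

Lemma optr_rho0 F : optr (@rho0 R d n F) = 1.
Proof.
rewrite /optr big_split /= -!mulr_sumr sumrB /opid -/(optr _) optr_ghzproj.
under eq_bigr do rewrite eqxx.
rewrite sumr_const card_qbasis -(rmorph_nat (real_complex R)) -rmorphB.
by rewrite mulr1 -rmorphM divfK ?pow2_sub1_neq0 // -rmorphD addrC subrK.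
Qed.

Lemma expect_Mop_sqr F x : expect F (opmul M M) x = 1.
Proof.
rewrite /expect Mop_sqr /optr -[Id]/(diagop (fun _ => 1)).
under eq_bigr do rewrite opmul_diagr mulr1 rhoxE mulrAC expi_mulJ mul1r.
by rewrite -/(optr _) optr_rho0.
Qed.

Lemma rho0_bitflip F s :
  rho0 F s (bitflip s) = (visibility F)%:C * ghzproj R s (bitflip s).
Proof. by rewrite /rho0 /opid (negbTE (bitflip_neq s)) /visibility rmorphB; ring. Qed.

Lemma expect_Mop F x : expect F M x = visibility F * cos (n%:R * xsum x).
Proof.
pose e s := expi (- phase x s).
pose h := (visibility F * 2^-1)%:C.
rewrite /expect /optr (eq_bigr (fun s => if is_ghz s then e s * h * (e (bitflip s))^* else 0)).
  rewrite -big_mkcond sum_ghz /zeros /ones !bitflip_const Re_expi_pair !phase_const /=.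
  by rewrite [X in cos X](_ : _ = - (n%:R * xsum x)) ?cosN; field.
move=> s _; rewrite opmul_Mop rhoxE rho0_bitflip ghzprojE is_ghz_bitflip andbb.
by case: ifP => _; rewrite /h ?rmorphM ?mulr0 ?mul0r.
Qed.

Lemma xsum_shift x i t : xsum (x + t *: delta_mx 0 i) = xsum x + t.
Proof.
rewrite /xsum; under eq_bigr do rewrite !mxE.
rewrite big_split /= -mulr_sumr [X in t * X](_ : _ = 1) ?mulr1 //.
by rewrite (eq_bigr (fun j => if j == i then 1 else 0)) ?sum_if_eqr // => j _; case: eqP.
Qed.

Lemma partial_expect_Mop F x i :
  partial (expect F M) x i = - (visibility F * n%:R * sin (n%:R * xsum x)).
Proof.
rewrite /partial (_ : (fun t => _) = fun t => visibility F * cos (n%:R * (xsum x + t))).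
  exact: derive1_scale_cos_shift.
by apply/funext => t; rewrite expect_Mop xsum_shift.
Qed.

Lemma dirgrad_expect_Mop F x :
  dirgrad (@v1 R d) (expect F M) x
  = - (Num.sqrt d%:R * (visibility F * n%:R * sin (n%:R * xsum x))).
Proof.
rewrite /dirgrad; under eq_bigr do rewrite partial_expect_Mop /v1 mxE.
by rewrite sumr_const card_ord -[_ *+ d]mulr_natl [LHS]mulrA divr_sqrt mulrN.
Qed.

Lemma sqrt_theta1 x : Num.sqrt d%:R * theta1 x = xsum x.
Proof.
rewrite /theta1 /xsum mulr_sumr; apply: eq_bigr => i _.
by rewrite /v1 mxE mulrA mulfV ?mul1r // gt_eqF // sqrtr_gt0 ltr0n.
Qed.

Lemma VarME F x :
  VarM n F x = (1 - visibility F ^+ 2 * cos (n%:R * xsum x) ^+ 2)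
               / (d%:R * n%:R ^+ 2 * visibility F ^+ 2 * sin (n%:R * xsum x) ^+ 2).
Proof.
rewrite /VarM expect_Mop_sqr expect_Mop dirgrad_expect_Mop normrN real_normK ?num_real //.
by rewrite !exprMn sqr_sqrtr ?ler0n //; congr (_ / _); ring.
Qed.

Local Close Scope complex_scope.

Lemma sin_phase_sqr_le x :
  sin (n%:R * xsum x) ^+ 2 <= d%:R * n%:R ^+ 2 * \sum_(i < d) x 0 i ^+ 2.
Proof.
apply: le_trans (sin_sqr_le _) _.
by rewrite exprMn [d%:R * _]mulrC -[X in _ <= X]mulrA ler_wpM2l ?sqr_ge0 ?sqr_sum_le.
Qed.

Lemma dirgrad_expect_Mop_neq0 F x :
  dirgrad (@v1 R d) (expect F M) x != 0 -> visibility F * sin (n%:R * xsum x) != 0.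
Proof.
rewrite dirgrad_expect_Mop; apply: contra => /eqP cs0.
by rewrite mulrAC cs0 mul0r mulr0 oppr0.
Qed.

Lemma sum_sqr_gt0 F x : dirgrad (@v1 R d) (expect F M) x != 0 -> 0 < \sum_(i < d) x 0 i ^+ 2.
Proof.
move/dirgrad_expect_Mop_neq0; rewrite mulf_eq0 negb_or => /andP[_ s_neq0].
have dn_gt0 : 0 < d%:R * n%:R ^+ 2 :> R by rewrite mulr_gt0 ?exprn_gt0 ?ltr0n.
rewrite -(pmulr_rgt0 _ dn_gt0); apply: lt_le_trans (sin_phase_sqr_le x).
by rewrite lt0r sqrf_eq0 s_neq0 sqr_ge0.
Qed.

Lemma VarM_ge F x :
  visibility F ^+ 2 < 1 -> dirgrad (@v1 R d) (expect F M) x != 0 ->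
  (1 - visibility F ^+ 2) / ((d%:R * n%:R ^+ 2) ^+ 2 * \sum_(i < d) x 0 i ^+ 2)
  <= VarM n F x.
Proof.
move=> c_lt1 grad_neq0; rewrite VarME.
have := dirgrad_expect_Mop_neq0 grad_neq0; have := sin_phase_sqr_le x.
set c := visibility F; set s := sin _; set D := d%:R * n%:R ^+ 2.
set Q := \sum_(i < d) _ => s_le cs_neq0.
have D_gt0 : 0 < D by rewrite mulr_gt0 ?exprn_gt0 ?ltr0n.
have cs_gt0 : 0 < (c * s) ^+ 2 by rewrite lt0r sqrf_eq0 cs_neq0 sqr_ge0.
have den_le : D * (c * s) ^+ 2 <= D ^+ 2 * Q.
  rewrite [D ^+ 2]expr2 -mulrA ler_pM2l //; apply: le_trans _ s_le.
  by rewrite exprMn ler_piMl ?sqr_ge0 ?ltW.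
have num_ge : 1 - c ^+ 2 <= 1 - c ^+ 2 * cos (n%:R * xsum x) ^+ 2.
  by rewrite lerD2l lerN2 ler_piMr ?sqr_ge0 // -(cos2Dsin2 (n%:R * xsum x)) lerDl sqr_ge0.
have DcsE : D * c ^+ 2 * s ^+ 2 = D * (c * s) ^+ 2 by rewrite -mulrA -exprMn.
have DQ_gt0 : 0 < D ^+ 2 * Q := lt_le_trans (mulr_gt0 D_gt0 cs_gt0) den_le.
rewrite DcsE; apply: ler_pM => //; first by rewrite subr_ge0 ltW.
  by rewrite invr_ge0 ltW.
by rewrite lef_pV2 // posrE // mulr_gt0.
Qed.

End Nondegenerate.
End Operators.

Theorem mainTheorem7 (R : realType) (d n : nat) (F : R) :
  (2 <= d)%N -> (1 <= n)%N -> 0 <= F -> F < 1 ->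
  F != ((2 ^ (n * d))%:R)^-1 ->
  let c := F - (1 - F) / ((2 ^ (n * d))%:R - 1) in
  (forall x : 'rV[R]_d,
     dirgrad (@v1 R d) (expect F (@Mop R d n)) x != 0 ->
     VarM n F x =
       (1 - c ^+ 2 * cos (n%:R * Num.sqrt (d%:R : R) * theta1 x) ^+ 2)
       / (d%:R * n%:R ^+ 2 * c ^+ 2
          * sin (n%:R * Num.sqrt (d%:R : R) * theta1 x) ^+ 2)) /\
  (forall A : R, exists2 delta : R, 0 < delta &
     forall x : 'rV[R]_d, \sum_(i < d) x 0 i ^+ 2 < delta ->
       dirgrad (@v1 R d) (expect F (@Mop R d n)) x != 0 ->
       A < VarM n F x).
Proof.
(* [F != 2^-N] says [c != 0], which the nonvanishing gradient already implies. *)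
move=> d_ge2 n_gt0 F_ge0 F_lt1 _ c.
have d_gt0 : (0 < d)%N := ltnW d_ge2.
split=> [x _|A]; first by rewrite VarME // -![n%:R * _ * theta1 x]mulrA sqrt_theta1.
have c_lt1 : c ^+ 2 < 1.
  apply: depolarized_visibility_sqr_lt1 => //.
  rewrite (ltr_nat R 2) -[2%N]/(2 ^ 1)%N ltn_exp2l //.
  by rewrite (leq_trans d_ge2) // leq_pmull.
have K_gt0 : 0 < 1 - c ^+ 2 by rewrite subr_gt0.
have D_gt0 : 0 < (d%:R * n%:R ^+ 2) ^+ 2 :> R by rewrite !exprn_gt0 ?mulr_gt0 ?ltr0n.
exists ((1 - c ^+ 2) / ((d%:R * n%:R ^+ 2) ^+ 2 * (`|A| + 1))).
  by rewrite divr_gt0 // mulr_gt0 // ltr_wpDl.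
move=> x x_small grad_neq0; apply: lt_le_trans (VarM_ge d_gt0 n_gt0 c_lt1 grad_neq0).
exact: lt_div_of_small K_gt0 D_gt0 (sum_sqr_gt0 d_gt0 n_gt0 grad_neq0) x_small.
Qed.
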